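(* Let $A\to M$ be a vector bundle of rank at least $n$. Let $\widehat{\xi}^1,\dots,\widehat{\xi}^n\in\Gamma(A^* )$ be linearly independent over $C^\infty(M)$ and let $\widehat{X}_1,\dots,\widehat{X}_n$ be covariant differential operators on $A$ with symbols $\widehat{x}_1,\dots,\widehat{x}_n\in\Gamma(TM)$. Define $a_A(y)=\sum_i\langle y,\widehat{\xi}^i\rangle\widehat{x}_i$ and $$[y,z]_A=\sum_{i=1}^n\Big(\langle y,\widehat{\xi}^i\rangle\widehat{X}_i(z)-\langle z,\widehat{\xi}^i\rangle\widehat{X}_i(y)\Big),\qquad y,z\in\Gamma(A).$$ Suppose there are $a_{ik}^j\in C^\infty(M)$ such that for all $i,j$ $$\widehat{X}_i(\widehat{\xi}^j)=\sum_k a_{ik}^j\widehat{\xi}^k,\qquad [\widehat{x}_i,\widehat{x}_j]=\sum_k\big(a_{ji}^k-a_{ij}^k\big)\widehat{x}_k .$$ Then $(A,[\cdot,\cdot]_A,a_A)$ is a dull algebroid.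
   Context: A covariant differential operator on $A$ is an $\mathbb{R}$-linear map $\widehat{X}:\Gamma(A)\to\Gamma(A)$ with a vector field $\widehat{x}$ (its symbol) such that $\widehat{X}(fy)=f\widehat{X}(y)+\widehat{x}(f)y$; it acts on $\Gamma(A^* )$ by $\langle\widehat{X}(\xi),y\rangle=\widehat{x}\langle\xi,y\rangle-\langle\xi,\widehat{X}(y)\rangle$. A dull algebroid is a triple $(A,[\cdot,\cdot],a_A)$ with $a_A:A\to TM$ a bundle map and $[\cdot,\cdot]$ a skew-symmetric $\mathbb{R}$-bilinear bracket on $\Gamma(A)$ satisfying $[x,fy]=f[x,y]+a_A(x)(f)y$ and $a_A([x,y])=[a_A(x),a_A(y)]$. *)

(* Algebraic model of the smooth setting:
   R      : the scalar field (R in the paper),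
   C      : commutative R-algebra playing the role of C^oo(M),
   V      : C-module playing the role of Gamma(A),
   covectors (elements of Gamma(A^* )) : C-linear maps V -> C,
   vector fields (Gamma(TM)) : R-linear derivations C -> C,
   Lie bracket of vector fields : commutator of derivations. *)
From HB Require Import structures.
From mathcomp Require Import all_boot all_order all_algebra.
Set Implicit Arguments. Unset Strict Implicit. Unset Printing Implicit Defensive.
Import Order.TTheory GRing.Theory.
Local Open Scope ring_scope.

Section Defs.
Variables (R : fieldType) (C : comAlgType R) (V : lmodType C).

Definition is_vector_field (d : C -> C) : Prop :=
  (forall (r : R) (f g : C), d (r *: f + g) = r *: d f + d g) /\
  (forall f g : C, d (f * g) = f * d g + d f * g).

Definition vf_bracket (d e : C -> C) : C -> C := fun f => d (e f) - e (d f).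

(* section of A^* : C-linear map Gamma(A) -> C; pairing <y, xi> = xi y *)
Definition is_covector (xi : V -> C) : Prop :=
  forall (f : C) (y z : V), xi (f *: y + z) = f * xi y + xi z.

Definition R_linear (T : V -> V) : Prop :=
  forall (r : R) (y z : V), T (r%:A *: y + z) = r%:A *: T y + T z.

Definition is_cdo (X : V -> V) (x : C -> C) : Prop :=
  is_vector_field x /\ R_linear X /\
  forall (f : C) (y : V), X (f *: y) = f *: X y + x f *: y.

(* action of a covariant differential operator on Gamma(A^* ) *)
Definition cdo_dual (X : V -> V) (x : C -> C) (xi : V -> C) : V -> C :=
  fun y => x (xi y) - xi (X y).

Definition covectors_independent n (xi : 'I_n -> V -> C) : Prop :=
  forall c : 'I_n -> C, (forall y, \sum_(i < n) c i * xi i y = 0) ->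
    forall i, c i = 0.

Definition anchor_of n (xi : 'I_n -> V -> C) (x : 'I_n -> C -> C)
  (y : V) : C -> C := fun f => \sum_(i < n) xi i y * x i f.

Definition bracket_of n (xi : 'I_n -> V -> C) (X : 'I_n -> V -> V)
  (y z : V) : V := \sum_(i < n) (xi i y *: X i z - xi i z *: X i y).

Definition dull_algebroid (br : V -> V -> V) (anc : V -> C -> C) : Prop :=
  (* a_A is a bundle map A -> TM: C-linear with values in vector fields *)
  (forall y, is_vector_field (anc y)) /\
  (forall (f : C) (y z : V) (g : C), anc (f *: y + z) g = f * anc y g + anc z g) /\
  (forall (r : R) (y z w : V), br (r%:A *: y + z) w = r%:A *: br y w + br z w) /\
  (forall (r : R) (y z w : V), br w (r%:A *: y + z) = r%:A *: br w y + br w z) /\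
  (forall y z, br y z = - br z y) /\
  (forall (f : C) (y z : V), br y (f *: z) = f *: br y z + anc y f *: z) /\
  (forall y z, anc (br y z) = vf_bracket (anc y) (anc z)).

End Defs.

(* The anchor is a C^oo(M)-linear combination of the vector fields x_i, hence a
   bundle map into TM, and bilinearity, skew-symmetry and the Leibniz rule of the
   bracket follow from the Leibniz rule of the operators X_i.  For the anchor to
   preserve brackets, pair [y,z]_A with xi^j using X_i(xi^j) = sum_k a_ik^j xi^k:
   the terms differentiating the coefficients <y,xi^i>, <z,xi^i> are exactly those
   of [a_A(y), a_A(z)], and the remaining terms on both sides are sums over the
   structure functions a_ik^j which agree after relabelling the indices, by the
   hypothesis on [x_i, x_j]. *)

From HB Require Import structures.
From mathcomp Require Import all_boot all_order all_algebra.
From mathcomp Require Import ring.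
From Stdlib Require Import FunctionalExtensionality.
Set Implicit Arguments. Unset Strict Implicit. Unset Printing Implicit Defensive.
Import GRing.Theory.
Local Open Scope ring_scope.

Section VectorFields.
Variables (R : fieldType) (C : comAlgType R).
Implicit Types (d : C -> C).

Lemma vfD d : is_vector_field d -> {morph d : f g / f + g}.
Proof. by move=> [Hlin _] f g; rewrite -[f in LHS]scale1r Hlin scale1r. Qed.

Lemma vf0 d : is_vector_field d -> d 0 = 0.
Proof. by move=> Hd; apply: (addrI (d 0)); rewrite -vfD // !addr0. Qed.

Lemma vf_sum d n (F : 'I_n -> C) :
  is_vector_field d -> d (\sum_(i < n) F i) = \sum_(i < n) d (F i).
Proof. by move=> Hd; rewrite (big_morph d (vfD Hd) (vf0 Hd)). Qed.

Lemma vfM d : is_vector_field d -> forall f g, d (f * g) = f * d g + d f * g.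
Proof. by case. Qed.

Definition vf_lincomb n (p : 'I_n -> C) (x : 'I_n -> C -> C) : C -> C :=
  fun f => \sum_(i < n) p i * x i f.

Section Lincomb.
Variables (n : nat) (x : 'I_n -> C -> C).
Hypothesis Hx : forall i, is_vector_field (x i).

Lemma is_vector_field_lincomb p : is_vector_field (vf_lincomb p x).
Proof.
split=> [r f g | f g]; rewrite /vf_lincomb.
  rewrite scaler_sumr -big_split; apply: eq_bigr => i _ /=.
  by case: (Hx i) => -> _; rewrite mulrDr scalerAr.
rewrite mulr_sumr mulr_suml -big_split; apply: eq_bigr => i _ /=.
by rewrite (vfM (Hx i)); ring.
Qed.

Lemma vf_lincomb_comp p q f :
  vf_lincomb p x (vf_lincomb q x f) =
  \sum_(i < n) \sum_(j < n) p i * q j * x i (x j f)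
  + \sum_(j < n) vf_lincomb p x (q j) * x j f.
Proof.
rewrite /vf_lincomb; under [X in _ + X]eq_bigr => j _ do rewrite mulr_suml.
rewrite [X in _ + X]exchange_big -big_split; apply: eq_bigr => i _ /=.
rewrite (vf_sum _ (Hx i)) mulr_sumr -big_split; apply: eq_bigr => j _ /=.
by rewrite (vfM (Hx i)); ring.
Qed.

Lemma vf_bracket_lincomb p q f :
  vf_bracket (vf_lincomb p x) (vf_lincomb q x) f =
  \sum_(i < n) \sum_(j < n) p i * q j * vf_bracket (x i) (x j) f
  + \sum_(j < n) (vf_lincomb p x (q j) - vf_lincomb q x (p j)) * x j f.
Proof.
rewrite /vf_bracket !vf_lincomb_comp [\sum_i \sum_j q i * _ * _]exchange_big /=.
rewrite opprD addrACA -sumrB -[X in _ + X]sumrB; congr (_ + _).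
  apply: eq_bigr => i _; rewrite -sumrB; apply: eq_bigr => j _; ring.
by apply: eq_bigr => j _; rewrite mulrBl.
Qed.

End Lincomb.
End VectorFields.

Lemma structure_constants_reindex (K : comPzRingType) n (p q g : 'I_n -> K)
    (a : 'I_n -> 'I_n -> 'I_n -> K) :
  \sum_(i < n) \sum_(j < n) p i * q j * \sum_(k < n) (a j i k - a i j k) * g k
  = \sum_(j < n) (\sum_(i < n) \sum_(k < n) a i k j * (q i * p k - p i * q k)) * g j.
Proof.
have -> : \sum_(i < n) \sum_(j < n) p i * q j * \sum_(k < n) (a j i k - a i j k) * g k
  = \sum_(i < n) \sum_(j < n) \sum_(k < n) q j * p i * a j i k * g k
  - \sum_(i < n) \sum_(j < n) \sum_(k < n) p i * q j * a i j k * g k.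
  rewrite -sumrB; apply: eq_bigr => i _; rewrite -sumrB; apply: eq_bigr => j _.
  by rewrite mulr_sumr -sumrB; apply: eq_bigr => k _; ring.
have -> : \sum_(j < n) (\sum_(i < n) \sum_(k < n) a i k j * (q i * p k - p i * q k)) * g j
  = \sum_(j < n) \sum_(i < n) \sum_(k < n) q i * p k * a i k j * g j
  - \sum_(j < n) \sum_(i < n) \sum_(k < n) p i * q k * a i k j * g j.
  rewrite -sumrB; apply: eq_bigr => j _; rewrite mulr_suml -sumrB.
  by apply: eq_bigr => i _; rewrite mulr_suml -sumrB; apply: eq_bigr => k _; ring.
congr (_ - _); rewrite [RHS]exchange_big /=.
  by rewrite [LHS]exchange_big; apply: eq_bigr => i _; rewrite exchange_big.
by apply: eq_bigr => i _; rewrite [RHS]exchange_big.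
Qed.

Section Covectors.
Variables (R : fieldType) (C : comAlgType R) (V : lmodType C).
Variable xi : V -> C.
Hypothesis Hxi : is_covector xi.

Lemma covD : {morph xi : y z / y + z}.
Proof. by move=> y z; rewrite -[y in LHS]scale1r Hxi mul1r. Qed.

Lemma cov0 : xi 0 = 0.
Proof. by apply: (addrI (xi 0)); rewrite -covD !addr0. Qed.

Lemma covZ f y : xi (f *: y) = f * xi y.
Proof. by rewrite -[f *: y]addr0 Hxi cov0 addr0. Qed.

Lemma covB y z : xi (y - z) = xi y - xi z.
Proof. by rewrite covD -scaleN1r covZ mulN1r. Qed.

Lemma cov_sum n (F : 'I_n -> V) : xi (\sum_(i < n) F i) = \sum_(i < n) xi (F i).
Proof. by rewrite (big_morph xi covD cov0). Qed.

End Covectors.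

Section Algebroid.
Variables (R : fieldType) (C : comAlgType R) (V : lmodType C) (n : nat).
Variables (xi : 'I_n -> V -> C) (X : 'I_n -> V -> V) (x : 'I_n -> C -> C).
Hypothesis Hxi : forall i, is_covector (xi i).
Hypothesis HX : forall i, is_cdo (X i) (x i).

Local Notation anchor := (anchor_of xi x).
Local Notation bracket := (bracket_of xi X).

Lemma is_vector_field_symbol i : is_vector_field (x i).
Proof. by case: (HX i). Qed.

Lemma is_vector_field_anchor y : is_vector_field (anchor y).
Proof. exact: (is_vector_field_lincomb is_vector_field_symbol). Qed.

Lemma anchor_linear f y z g : anchor (f *: y + z) g = f * anchor y g + anchor z g.
Proof.
rewrite /anchor_of mulr_sumr -big_split; apply: eq_bigr => i _ /=.
by rewrite Hxi mulrDl mulrA.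
Qed.

Lemma bracketC y z : bracket y z = - bracket z y.
Proof. by rewrite /bracket_of -sumrN; apply: eq_bigr => i _; rewrite opprB. Qed.

Lemma bracket_linear_r r y z w :
  bracket w (r%:A *: y + z) = r%:A *: bracket w y + bracket w z.
Proof.
rewrite /bracket_of scaler_sumr -big_split; apply: eq_bigr => i _ /=.
have [_ [HXlin _]] := HX i.
rewrite Hxi HXlin scalerDr scalerDl scalerBr !scalerA [xi i w * _]mulrC -!scalerA.
by rewrite addrACA opprD.
Qed.

Lemma bracket_linear_l r y z w :
  bracket (r%:A *: y + z) w = r%:A *: bracket y w + bracket z w.
Proof. by rewrite bracketC bracket_linear_r opprD -scalerN -!bracketC. Qed.

Lemma bracket_leibniz f y z :
  bracket y (f *: z) = f *: bracket y z + anchor y f *: z.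
Proof.
rewrite /bracket_of /anchor_of scaler_sumr scaler_suml -big_split.
apply: eq_bigr => i _ /=; have [_ [_ HXleib]] := HX i.
rewrite HXleib covZ // scalerDr scalerBr !scalerA mulrC -!scalerA.
by rewrite addrAC.
Qed.

Variable a : 'I_n -> 'I_n -> 'I_n -> C.
Hypothesis Ha : forall i j y, cdo_dual (X i) (x i) (xi j) y = \sum_(k < n) a i k j * xi k y.
Hypothesis Hb : forall i j f,
  vf_bracket (x i) (x j) f = \sum_(k < n) (a j i k - a i j k) * x k f.

Lemma covector_cdo i j y : xi j (X i y) = x i (xi j y) - \sum_(k < n) a i k j * xi k y.
Proof. by rewrite -Ha /cdo_dual opprB addrC subrK. Qed.

Lemma covector_bracket j y z :
  xi j (bracket y z) = anchor y (xi j z) - anchor z (xi j y)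
    + \sum_(i < n) \sum_(k < n) a i k j * (xi i z * xi k y - xi i y * xi k z).
Proof.
rewrite /bracket_of /anchor_of cov_sum // -sumrB -big_split; apply: eq_bigr => i _ /=.
rewrite covB // !covZ // !covector_cdo.
have -> : \sum_(k < n) a i k j * (xi i z * xi k y - xi i y * xi k z)
    = xi i z * \sum_(k < n) a i k j * xi k y - xi i y * \sum_(k < n) a i k j * xi k z.
  by rewrite !mulr_sumr -sumrB; apply: eq_bigr => k _; ring.
ring.
Qed.

Lemma anchor_bracket y z : anchor (bracket y z) = vf_bracket (anchor y) (anchor z).
Proof.
apply: functional_extensionality => f.
rewrite [RHS](vf_bracket_lincomb is_vector_field_symbol).
under [X in _ = X + _]eq_bigr => i _ do under eq_bigr => j _ do rewrite Hb.
rewrite structure_constants_reindex addrC -big_split /=.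
by apply: eq_bigr => j _; rewrite covector_bracket mulrDl.
Qed.

End Algebroid.

Theorem proposition2p10 (R : fieldType) (C : comAlgType R) (V : lmodType C)
  (n : nat) (xi : 'I_n -> V -> C) (X : 'I_n -> V -> V) (x : 'I_n -> C -> C)
  (a : 'I_n -> 'I_n -> 'I_n -> C)
  (Hxi : forall i, is_covector (xi i))
  (Hind : covectors_independent xi)
  (HX : forall i, is_cdo (X i) (x i))
  (Ha : forall i j (y : V),
     cdo_dual (X i) (x i) (xi j) y = \sum_(k < n) a i k j * xi k y)
  (Hb : forall i j (f : C),
     vf_bracket (x i) (x j) f = \sum_(k < n) (a j i k - a i j k) * x k f) :
  dull_algebroid (bracket_of xi X) (anchor_of xi x).
Proof.
split; first exact: is_vector_field_anchor HX.
split; first exact: anchor_linear Hxi.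
split; first exact: bracket_linear_l Hxi HX.
split; first exact: bracket_linear_r Hxi HX.
split; first exact: bracketC.
split; first exact: bracket_leibniz Hxi HX.
exact: (anchor_bracket Hxi HX Ha Hb).
Qed.
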